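(* Let $n>k\geq1$, $r=n-k$, $2\leq h\leq n-k$, $k<d\leq n-h$, $\delta=\gcd(h,d-k)$, $s_0=\frac{d-k+\delta}{\delta}$, $s=\frac{d-k+h}{\delta}$, $\ell=s\cdot s_0^n$, and let $\mathcal{C}_3$ be the code defined over a finite field $F$ ($|F|\geq s_0n$, with $s_0n$ distinct elements $\lambda_{i,j}\in F$, $i\in[n]$, $j\in[0,s_0-1]$) by the parity check equations $\sum_{i=1}^n \lambda_{i,a_i}^{t-1} c_{i,(a,b)}=0$ for all $a\in[0,s_0^n-1]$, $b\in[0,s-1]$, $t\in[r]$. Let $\mathcal{H}\subseteq[n]$ with $|\mathcal{H}|=h$, let $\mathcal{R}\subseteq[n]\setminus\mathcal{H}$ with $|\mathcal{R}|=d$, and let $P_1,\ldots,P_{h/\delta}$ be a partition of $\mathcal{H}$ into disjoint subsets of size $\delta$. For $i\in[h/\delta]$ let $\Omega_i=\{0,1,\ldots,s_0-2,\,s_0-2+i\}$, and for $j\in[n]$, $a\in[0,s_0^n-1]$ define $$S^{(i)}_j(a)=\sum_{v=0}^{s_0-2}c_{j,(a(P_i,a|_{P_i}\oplus v\bm 1_\delta),\,v)}+c_{j,(a(P_i,a|_{P_i}\oplus(s_0-1)\bm 1_\delta),\,s_0-2+i)}.$$ Then for each $i\in[h/\delta]$ and every codeword of $\mathcal{C}_3$, the symbols $\{S^{(i)}_j(a): j\in\mathcal{R},\ a\in[0,s_0^n-1]\}$ determine both $\{c_{j,(a,b)}: j\in P_i,\ a\in[0,s_0^n-1],\ b\in\Omega_i\}$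 and $\{S^{(i)}_j(a): j\in\mathcal{H}\setminus P_i,\ a\in[0,s_0^n-1]\}$.
   Context: Notation: $[n]=\{1,\ldots,n\}$, $[i,j]=\{i,\ldots,j\}$. Each $\tau\in[0,\ell-1]$ is written uniquely as $\tau=b\cdot s_0^n+\sum_{i=1}^n a_i s_0^{i-1}$ with $b\in[0,s-1]$, $a_i\in[0,s_0-1]$; we write $a=(a_1,\ldots,a_n)$ and $\tau=(a,b)$, and $\bm c_i=(c_{i,0},\ldots,c_{i,\ell-1})\in F^\ell$ with $c_{i,(a,b)}=c_{i,\tau}$. For $\mathcal{X}\subseteq[n]$, $a|_{\mathcal{X}}$ denotes the vector of digits $(a_x)_{x\in\mathcal{X}}$, and for $\bm v\in[0,s_0-1]^{|\mathcal{X}|}$, $a(\mathcal{X},\bm v)$ is the integer whose digits on $\mathcal{X}$ equal $\bm v$ and whose other digits equal those of $a$. The operation $\oplus$ is digitwise addition modulo $s_0$, and $\bm 1_\delta$ is the all-one vector of length $\delta$. *)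

From HB Require Import structures.
From mathcomp Require Import all_boot all_order all_algebra.
Set Implicit Arguments. Unset Strict Implicit. Unset Printing Implicit Defensive.
Import GRing.Theory.
Local Open Scope ring_scope.

Definition delta (h d k : nat) : nat := gcdn h (d - k).
Definition s0_of (h d k : nat) : nat := ((d - k + delta h d k) %/ delta h d k)%N.
Definition s_of (h d k : nat) : nat := ((d - k + h) %/ delta h d k)%N.

(* A symbol index tau = (a, b): a is the digit vector (a_1,...,a_n) in
   [0,s0-1]^n (encoded as a finite function 'I_n -> 'I_s0), b in [0,s-1].
   A codeword is c : 'I_n -> digits -> 'I_s -> F, c i a b = c_{i,(a,b)}. *)
Definition digits (n s0 : nat) := {ffun 'I_n -> 'I_s0}.

(* Read c_{j,(a,b)} with b given as a natural number (0 if b >= s,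
   never used in the statement since all used b are < s). *)
Definition cat (F : Type) (zero : F) (s : nat) (f : 'I_s -> F) (m : nat) : F :=
  match insub m with Some b => f b | None => zero end.

(* a(P, a|_P (+) v 1) : add v modulo s0 to every digit indexed by P *)
Definition shiftd (n s0 : nat) (P : {set 'I_n}) (v : nat) (a : digits n s0)
  : digits n s0 :=
  [ffun x => if x \in P then insubd (a x) (((a x : nat) + v) %% s0)%N else a x].

Definition in_C3 (F : fieldType) (n r s0 s : nat) (lam : 'I_n -> 'I_s0 -> F)
  (c : 'I_n -> digits n s0 -> 'I_s -> F) : Prop :=
  forall (a : digits n s0) (b : 'I_s) (t : 'I_r),
    \sum_(i < n) (lam i (a i)) ^+ t * c i a b = 0.

(* S^{(i)}_j(a), with i given 1-indexed as a natural number *)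
Definition Ssym (F : fieldType) (n s0 s : nat)
  (c : 'I_n -> digits n s0 -> 'I_s -> F) (P : {set 'I_n}) (i : nat)
  (j : 'I_n) (a : digits n s0) : F :=
  \sum_(v < s0.-1) cat 0 (c j (shiftd P v a)) v
  + cat 0 (c j (shiftd P s0.-1 a)) (s0.-2 + i)%N.

From Pilot Require Import Defs.
From HB Require Import structures.
From mathcomp Require Import all_boot all_order all_algebra.
From mathcomp Require Import zify.
Set Implicit Arguments. Unset Strict Implicit. Unset Printing Implicit Defensive.
Import GRing.Theory.
Local Open Scope ring_scope.

(* Work with the difference e = c - c', again a codeword. Fix a and sum the
   parity checks of e over the s0 shifted indices (a(P_i, a|_P_i + v 1), w_v),
   where w_v runs through Omega_i. A node j outside P_i keeps its evaluation
   point lam_{j,a_j} under every shift, so it contributes lam_{j,a_j}^t S_j(a);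
   a node j in P_i contributes s0 distinct points lam_{j,a_j + v}. This is a
   Vandermonde system with at most delta s0 + (n - delta - d) <= n - k unknowns
   once the S_j(a), j in R, vanish, so all unknowns are zero. *)

Lemma vandermonde_weights_eq0 (F : fieldType) (I : finType) (A : {set I})
    (x y : I -> F) (r : nat) :
  {in A &, injective x} -> (#|A| <= r)%N -> (forall l, l \notin A -> y l = 0) ->
  (forall t, (t < r)%N -> \sum_l x l ^+ t * y l = 0) -> forall l, y l = 0.
Proof.
move=> x_inj A_le y_out power_sums l0; have [l0A|] := boolP (l0 \in A); last exact: y_out.
pose p := \prod_(l <- enum (A :\ l0)) ('X - (x l)%:P).
have p_size : (size p <= r)%N.
  by rewrite size_prod_XsubC -cardE (cardsD1 l0 A) l0A in A_le *.
have p_horner z : p.[z] = \prod_(l in A :\ l0) (z - x l).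
  by rewrite horner_prod big_enum; apply: eq_bigr => l _; rewrite hornerXsubC.
have : \sum_l p.[x l] * y l = 0.
  under eq_bigr do rewrite horner_coef mulr_suml.
  rewrite exchange_big /= big1 // => t _.
  under eq_bigr do rewrite -mulrA.
  by rewrite -mulr_sumr power_sums ?mulr0 // (leq_trans _ p_size).
rewrite (bigD1 l0) //= big1 ?addr0 => [/eqP|l ll0].
  rewrite mulf_eq0 p_horner => /orP[|/eqP //].
  rewrite (negbTE (introT (prodf_neq0 _ _) _)) // => l.
  rewrite !inE subr_eq0 => /andP[ll0 lA].
  by apply: contra ll0 => /eqP xl0l; rewrite (x_inj _ _ l0A lA xl0l).
have [lA|/y_out ->] := boolP (l \in A); last by rewrite mulr0.
by rewrite p_horner (bigD1 l) ?inE ?ll0 //= subrr !mul0r.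
Qed.

Lemma catB (F : fieldType) (s : nat) (f g : 'I_s -> F) (m : nat) :
  Defs.cat 0 (fun b => f b - g b) m = Defs.cat 0 f m - Defs.cat 0 g m.
Proof. by rewrite /Defs.cat; case: insub => [b|] //; rewrite subr0. Qed.

Lemma cat_ord (F : fieldType) (s : nat) (f : 'I_s -> F) (b : 'I_s) :
  Defs.cat 0 f b = f b.
Proof. by rewrite /Defs.cat valK. Qed.

Lemma cat_default (F : fieldType) (s : nat) (f : 'I_s -> F) (m : nat) :
  (s <= m)%N -> Defs.cat 0 f m = 0.
Proof. by move=> s_le_m; rewrite /Defs.cat insubF // ltnNge s_le_m. Qed.

Lemma in_C3B (F : fieldType) (n r s0 s : nat) (lam : 'I_n -> 'I_s0 -> F)
    (c c' : 'I_n -> digits n s0 -> 'I_s -> F) :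
  in_C3 r lam c -> in_C3 r lam c' -> in_C3 r lam (fun j a b => c j a b - c' j a b).
Proof.
move=> Cc Cc' a b t; under eq_bigr do rewrite mulrBr.
by rewrite sumrB Cc Cc' subrr.
Qed.

Lemma SsymB (F : fieldType) (n s0 s : nat) (c c' : 'I_n -> digits n s0 -> 'I_s -> F)
    (P : {set 'I_n}) (m : nat) (j : 'I_n) (a : digits n s0) :
  Ssym (fun j a b => c j a b - c' j a b) P m j a = Ssym c P m j a - Ssym c' P m j a.
Proof.
rewrite /Ssym; under eq_bigr do rewrite (@catB _ _ (c j _) (c' j _)).
by rewrite (@catB _ _ (c j _) (c' j _)) sumrB opprD addrACA.
Qed.

Section Shift.
Variables (n s0 : nat) (P : {set 'I_n}).

Lemma shiftd_notin (v : nat) (a : digits n s0) (j : 'I_n) :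
  j \notin P -> shiftd P v a j = a j.
Proof. by move=> jNP; rewrite ffunE (negbTE jNP). Qed.

Lemma shiftd_inj (a : digits n s0) (j : 'I_n) (v v' : 'I_s0) :
  j \in P -> shiftd P v a j = shiftd P v' a j -> v = v'.
Proof.
move=> jP; rewrite !ffunE jP => /(congr1 val).
have s0_gt0 : (0 < s0)%N by have := ltn_ord v; lia.
rewrite !val_insubd !ltn_pmod // => /eqP.
by rewrite eqn_modDl !modn_small // => /eqP/val_inj.
Qed.

Lemma shiftdK (v : nat) (a : digits n s0) :
  (v <= s0)%N -> shiftd P v (shiftd P (s0 - v) a) = a.
Proof.
move=> v_le; apply/ffunP => x; rewrite !ffunE.
case: ifP => xP; last by rewrite xP.
apply: val_inj => /=.
have s0_gt0 : (0 < s0)%N by have := ltn_ord (a x); lia.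
rewrite xP !val_insubd !ltn_pmod //= modnDml -addnA subnK // modnDr.
by rewrite modn_small.
Qed.

End Shift.

Section Repair.
Variables (F : fieldType) (n r s0 s : nat) (lam : 'I_n -> 'I_s0 -> F).
Variables (P R : {set 'I_n}) (m : nat).
Hypothesis s0_gt0 : (0 < s0)%N.

(* The v-th element of Omega_i = {0, ..., s0 - 2, s0 - 2 + i}, with m = i. *)
Definition omega_col (v : nat) : nat := if (v < s0.-1)%N then v else (s0.-2 + m)%N.

Lemma Ssym_sum_omega (c : 'I_n -> digits n s0 -> 'I_s -> F) j a :
  Ssym c P m j a = \sum_(v < s0) Defs.cat 0 (c j (shiftd P v a)) (omega_col v).
Proof.
pose f v := Defs.cat 0 (c j (shiftd P v a)) (omega_col v).
have split_last : \sum_(0 <= v < s0) f v = \sum_(0 <= v < s0.-1) f v + f s0.-1.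
  by rewrite -{1}(prednK s0_gt0) big_nat_recr.
rewrite -(big_mkord predT f) split_last big_mkord /Ssym /f /omega_col ltnn.
by congr (_ + _); apply: eq_bigr => v _; rewrite ltn_ord.
Qed.

Lemma in_C3_sum_shifts (c : 'I_n -> digits n s0 -> 'I_s -> F) a t :
  in_C3 r lam c -> (t < r)%N ->
  \sum_(j < n) \sum_(v < s0)
     lam j (shiftd P v a j) ^+ t * Defs.cat 0 (c j (shiftd P v a)) (omega_col v) = 0.
Proof.
move=> Cc t_lt; rewrite exchange_big big1 // => v _.
have [col_lt|col_ge] := ltnP (omega_col v) s.
  apply: etrans (Cc (shiftd P v a) (Ordinal col_lt) (Ordinal t_lt)).
  by apply: eq_bigr => j _; rewrite -[omega_col v]/(nat_of_ord (Ordinal col_lt)) cat_ord.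
by apply: big1 => j _; rewrite cat_default ?mulr0.
Qed.

Hypothesis lam_inj : forall (i i' : 'I_n) (j j' : 'I_s0),
  lam i j = lam i' j' -> i = i' /\ j = j'.
Hypothesis few_unknowns : (#|P| * s0 + #|~: (P :|: R)| <= r)%N.

Variable e : 'I_n -> digits n s0 -> 'I_s -> F.
Hypothesis e_C3 : in_C3 r lam e.
Hypothesis e_R : forall j a, j \in R -> Ssym e P m j a = 0.

Section FixedDigits.
Variable a : digits n s0.

Definition eval_point (l : 'I_n * 'I_s0) : F := lam l.1 (shiftd P l.2 a l.1).

(* Nodes outside P_i have a single unknown S_j(a), placed at shift 0. *)
Definition unknown (l : 'I_n * 'I_s0) : F :=
  if l.1 \in P then Defs.cat 0 (e l.1 (shiftd P l.2 a)) (omega_col l.2)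
  else if l.2 == 0 :> nat then Ssym e P m l.1 a else 0.

Definition unknown_support : {set 'I_n * 'I_s0} :=
  setX P setT :|: setX (~: (P :|: R)) [set v : 'I_s0 | v == 0 :> nat].

Lemma card_unknown_support : (#|unknown_support| <= r)%N.
Proof.
apply: leq_trans (leq_card_setU _ _) _; rewrite !cardsX cardsT card_ord.
apply: leq_trans few_unknowns; rewrite leq_add2l -[leqRHS]muln1 leq_mul2l.
apply/orP; right; rewrite -(cards1 (Ordinal s0_gt0)); apply: subset_leq_card.
by apply/subsetP => v; rewrite !inE => /eqP v0; apply/eqP/val_inj.
Qed.

Lemma eval_point_inj : {in unknown_support &, injective eval_point}.
Proof.
move=> [j v] [j' v']; rewrite !inE /eval_point /= => l_supp l'_supp.
move=> /lam_inj[j_eq shift_eq]; subst j'; have [jP|jNP] := boolP (j \in P).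
  by move/shiftd_inj: shift_eq => /(_ jP) ->.
move: l_supp l'_supp; rewrite (negbTE jNP) /= => /andP[_ /eqP v0] /andP[_ /eqP v'0].
by congr pair; apply: val_inj; rewrite /= v0 v'0.
Qed.

Lemma unknown_out l : l \notin unknown_support -> unknown l = 0.
Proof.
case: l => j v; rewrite /unknown !inE /= andbT negb_or => /andP[jNP].
rewrite (negbTE jNP) => /nandP[/negPn jR|/negbTE ->] //.
by case: eqP => // _; rewrite e_R.
Qed.

Lemma unknown_power_sums t :
  (t < r)%N -> \sum_l eval_point l ^+ t * unknown l = 0.
Proof.
move=> t_lt; rewrite -[RHS](in_C3_sum_shifts a e_C3 t_lt).
have -> : \sum_l eval_point l ^+ t * unknown l =
          \sum_j \sum_v eval_point (j, v) ^+ t * unknown (j, v).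
  by rewrite pair_bigA; apply: eq_bigr => -[].
apply: eq_bigr => j _; rewrite /eval_point /unknown /=.
have [//|jNP] := boolP (j \in P).
under eq_bigr do rewrite shiftd_notin //.
under [RHS]eq_bigr do rewrite shiftd_notin //.
rewrite -!mulr_sumr -Ssym_sum_omega (bigD1 (Ordinal s0_gt0)) //= big1 ?addr0 //.
move=> v v_neq0; rewrite ifF //.
by apply: contraNF v_neq0 => /eqP v0; apply/eqP/val_inj.
Qed.

Lemma unknown_eq0 l : unknown l = 0.
Proof.
exact: (vandermonde_weights_eq0 eval_point_inj card_unknown_support
          unknown_out unknown_power_sums).
Qed.

Lemma unknown_in_P_eq0 j (v : 'I_s0) :
  j \in P -> Defs.cat 0 (e j (shiftd P v a)) (omega_col v) = 0.
Proof. by move=> jP; have := unknown_eq0 (j, v); rewrite /unknown /= jP. Qed.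

Lemma Ssym_notin_P_eq0 j : j \notin P -> Ssym e P m j a = 0.
Proof.
by move=> jNP; have := unknown_eq0 (j, Ordinal s0_gt0); rewrite /unknown /= (negbTE jNP).
Qed.

End FixedDigits.

Lemma omega_col_onto (b : nat) :
  (b < s0.-1)%N \/ b = (s0.-2 + m)%N -> exists v : 'I_s0, omega_col v = b.
Proof.
rewrite /omega_col; case: (ltnP b s0.-1) => [b_lt _|b_ge [//|->]].
  by exists (Ordinal (leq_trans b_lt (leq_pred s0))); rewrite /= b_lt.
have last_lt : (s0.-1 < s0)%N by rewrite (prednK s0_gt0).
by exists (Ordinal last_lt); rewrite /= ltnn.
Qed.

Lemma repair_in_P j a (b : 'I_s) :
  j \in P -> (b < s0.-1)%N \/ (b : nat) = (s0.-2 + m)%N -> e j a b = 0.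
Proof.
move=> jP /omega_col_onto [v col_v].
have := unknown_in_P_eq0 (shiftd P (s0 - v) a) v jP.
by rewrite shiftdK 1?ltnW // col_v cat_ord.
Qed.

End Repair.

Lemma delta_gt0 (h d k : nat) : (0 < h)%N -> (0 < delta h d k)%N.
Proof. by move=> h_gt0; rewrite gcdn_gt0 h_gt0. Qed.

Lemma s0_of_gt0 (h d k : nat) : (0 < h)%N -> (0 < s0_of h d k)%N.
Proof. by move=> h_gt0; rewrite divn_gt0 ?delta_gt0 ?leq_addl. Qed.

Lemma card_unknowns_C3 (n k h d : nat) (P R : {set 'I_n}) :
  (0 < h)%N -> (k <= d)%N -> (d + h <= n)%N -> #|P| = delta h d k -> #|R| = d ->
  [disjoint P & R] -> (#|P| * s0_of h d k + #|~: (P :|: R)| <= n - k)%N.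
Proof.
move=> h_gt0 k_le_d dh_le_n cardP cardR PR_disj.
have delta_le_h : (delta h d k <= h)%N by rewrite dvdn_leq ?dvdn_gcdl.
have delta_s0_le : (delta h d k * s0_of h d k <= d - k + delta h d k)%N.
  by rewrite mulnC leq_divM.
have := cardsC (P :|: R); rewrite cardsU (disjoint_setI0 PR_disj) cards0 card_ord.
by rewrite cardP cardR; lia.
Qed.

Theorem lemma1 (F : finFieldType) (n k h d : nat)
  (hkn : (1 <= k < n)%N)
  (hh : (2 <= h <= n - k)%N)
  (hd : (k < d <= n - h)%N)
  (lam : 'I_n -> 'I_(s0_of h d k) -> F)
  (hF : (s0_of h d k * n <= #|F|)%N)
  (lam_inj : forall (i i' : 'I_n) (j j' : 'I_(s0_of h d k)),
      lam i j = lam i' j' -> i = i' /\ j = j')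
  (H R : {set 'I_n})
  (hH : #|H| = h) (hRH : R \subset ~: H) (hR : #|R| = d)
  (P : 'I_(h %/ delta h d k) -> {set 'I_n})
  (hPcard : forall i, #|P i| = delta h d k)
  (hPdisj : forall i j, i != j -> [disjoint P i & P j])
  (hPcover : \bigcup_(i < h %/ delta h d k) P i = H) :
  forall (i : 'I_(h %/ delta h d k))
         (c c' : 'I_n -> digits n (s0_of h d k) -> 'I_(s_of h d k) -> F),
    in_C3 (n - k) lam c -> in_C3 (n - k) lam c' ->
    (forall j a, j \in R ->
       Ssym c (P i) i.+1 j a = Ssym c' (P i) i.+1 j a) ->
    (forall j a (b : 'I_(s_of h d k)), j \in P i ->
       ((b < (s0_of h d k).-1)%N \/ (b : nat) = ((s0_of h d k).-2 + i.+1)%N) ->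
       c j a b = c' j a b)
    /\
    (forall j a, j \in H :\: P i ->
       Ssym c (P i) i.+1 j a = Ssym c' (P i) i.+1 j a).
Proof.
move=> i c c' Cc Cc' S_R.
pose e j a b := c j a b - c' j a b.
have h_gt0 : (0 < h)%N by lia.
have s0_gt0 : (0 < s0_of h d k)%N by apply: s0_of_gt0.
have PiH : P i \subset H by rewrite -hPcover (bigcup_sup i).
have PiR_disj : [disjoint P i & R].
  by rewrite (disjointWl PiH) // disjoint_sym disjoints_subset.
have few : (#|P i| * s0_of h d k + #|~: (P i :|: R)| <= n - k)%N.
  by apply: card_unknowns_C3; rewrite ?hPcard //; lia.
have e_C3 := in_C3B Cc Cc'.
have e_R j a : j \in R -> Ssym e (P i) i.+1 j a = 0.
  by move=> jR; rewrite SsymB S_R ?subrr.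
split=> [j a b jP b_col|j a].
  exact/subr0_eq/(repair_in_P s0_gt0 lam_inj few e_C3 e_R).
rewrite inE => /andP[jNP _]; apply/subr0_eq.
by rewrite -SsymB (Ssym_notin_P_eq0 s0_gt0 lam_inj few e_C3 e_R).
Qed.
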